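(* For every $\alpha\in(0,\tfrac12)$ there is an online algorithm for non-clairvoyant dynamic bin packing whose total migrated size is at most a $\frac{\alpha}{1-2\alpha}$-fraction of the total size of the items, and which at every time $t$ has at most $\frac{1}{\alpha}\mathrm{OPT}_t+1$ open bins.
   Context: Dynamic bin packing: bins have capacity $1$; items arrive online at times $a_i\ge0$ with size $s_i\in[0,1]$ and duration $d_i>0$ (only the size is revealed at arrival), present during $[a_i,a_i+d_i)$. Each item is placed on arrival into an open bin with enough remaining capacity or a new bin; a migration moves an already placed item to another bin. In the size-cost model, each migration of item $i$ costs $s_i$; the total migrated size is the sum of these costs, and the total size of the items is $\sum_i s_i$. A bin is open while nonempty. $\mathrm{OPT}_t$ is the minimum number of unit bins needed to pack the items present at time $t$. *)

From HB Require Import structures.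
From mathcomp Require Import all_boot all_order all_algebra.
From mathcomp Require Import Rstruct.
From Stdlib Require Rdefinitions.
Notation R := Rdefinitions.R.

Set Implicit Arguments.
Unset Strict Implicit.
Unset Printing Implicit Defensive.

Import Order.TTheory GRing.Theory Num.Theory.
Local Open Scope ring_scope.

(** An item: arrival time a, size s, duration d (present during [a, a+d)). *)
Record item := Item { arr : R; sz : R; dur : R }.

(** Well-formed instance: finite list of items, a_i >= 0, s_i in [0,1],
    d_i > 0, listed in nondecreasing order of arrival time (so that the list
    index of an item is its arrival rank; ties are broken by list index). *)
Definition dflt_item := Item 0 0 1.
Definition it_ (I : seq item) (i : nat) : item := nth dflt_item I i.

Definition valid_instance (I : seq item) : Prop :=
  (forall i, (i < size I)%N ->
     0 <= arr (it_ I i) /\ 0 <= sz (it_ I i) <= 1 /\ 0 < dur (it_ I i))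
  /\ sorted (fun x y => arr x <= arr y) I.


Definition present_at (I : seq item) (t : R) (i : nat) : bool :=
  (arr (it_ I i) <= t) && (t < arr (it_ I i) + dur (it_ I i)).

(** Raw events: (time, kind, item index); kind 0 = departure, 1 = arrival.
    Events are processed in lexicographic order: by time, then departures
    before arrivals (intervals are half-open), then by item index. *)
Definition rawev := (R * nat * nat)%type.

Definition ev_time (e : rawev) : R := e.1.1.

Definition ev_le (e1 e2 : rawev) : bool :=
  (e1.1.1 < e2.1.1) ||
  ((e1.1.1 == e2.1.1) &&
   ((e1.1.2 < e2.1.2)%N || ((e1.1.2 == e2.1.2) && (e1.2 <= e2.2)%N))).

Definition arr_ev (I : seq item) (i : nat) : rawev := (arr (it_ I i), 1%N, i).
Definition dep_ev (I : seq item) (i : nat) : rawev :=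
  (arr (it_ I i) + dur (it_ I i), 0%N, i).

Definition events (I : seq item) : seq rawev :=
  sort ev_le ([seq dep_ev I i | i <- iota 0 (size I)] ++
              [seq arr_ev I i | i <- iota 0 (size I)]).

(** What an online non-clairvoyant algorithm observes: at an arrival, the
    current time and the size of the new item (items are identified by their
    arrival rank); at a departure, the current time and which item left.
    Durations are never revealed. *)
Inductive event :=
| Arrive of R & R      (* time, size *)
| Depart of R & nat.   (* time, arrival rank of the departing item *)

Definition observe (I : seq item) (e : rawev) : event :=
  if e.1.2 == 0%N then Depart e.1.1 e.2 else Arrive e.1.1 (sz (it_ I e.2)).

(** An online algorithm: after each event, given the whole observed history,
    it outputs the bin (a natural-number label) of every item (indexed by
    arrival rank); only the values on present items matter.  Placement of a
    newly arrived item and all migrations are read off from consecutive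
    outputs. *)
Definition online_alg := seq event -> nat -> nat.

Definition config (A : online_alg) (I : seq item) (k : nat) : nat -> nat :=
  A (map (observe I) (take k (events I))).

Definition present_after (I : seq item) (k i : nat) : bool :=
  (arr_ev I i \in take k (events I)) && (dep_ev I i \notin take k (events I)).

Definition feasible (A : online_alg) (I : seq item) : Prop :=
  forall k, (k <= size (events I))%N -> forall b : nat,
    \sum_(0 <= i < size I | present_after I k i && (config A I k i == b))
       sz (it_ I i) <= 1.

Definition migrated_size (A : online_alg) (I : seq item) : R :=
  \sum_(0 <= k < size (events I))
    \sum_(0 <= i < size I | [&& present_after I k i, present_after I k.+1 i
                              & config A I k i != config A I k.+1 i])
       sz (it_ I i).

Definition total_size (I : seq item) : R :=
  \sum_(0 <= i < size I) sz (it_ I i).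

Definition config_at (A : online_alg) (I : seq item) (t : R) : nat -> nat :=
  config A I (count (fun e => ev_time e <= t) (events I)) .

Definition open_bins (A : online_alg) (I : seq item) (t : R) : nat :=
  size (undup [seq config_at A I t i | i <- iota 0 (size I) & present_at I t i]).

Definition packable (I : seq item) (P : nat -> bool) (m : nat) : Prop :=
  exists f : nat -> nat,
    (forall i, (i < size I)%N -> P i -> (f i < m)%N) /\
    forall b : nat,
      \sum_(0 <= i < size I | P i && (f i == b)) sz (it_ I i) <= 1.

Definition OPT_le (I : seq item) (t : R) (m : nat) : Prop :=
  packable I (present_at I t) m.

From HB Require Import structures.
From mathcomp Require Import all_boot all_order all_algebra.
From mathcomp Require Import Rstruct.
From mathcomp Require Import lra zify.
Import Order.TTheory GRing.Theory Num.Theory.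
Set Implicit Arguments.
Unset Strict Implicit.
Unset Printing Implicit Defensive.
Local Open Scope ring_scope.

(* Items larger than [alpha] get a bin of their own.  A small item goes to the
   light bin (nonempty, with load below [alpha]) if there is one, else to the
   filling bin if it fits, else to a fresh filling bin; the old filling bin is
   then mature, with load above [1 - alpha].  When a departure leaves a bin
   light while another bin is light, the two are merged by moving the items of
   the mature one (they cannot both be the filling bin).

   So at most one bin is light, and [alpha] times the number of open bins
   minus one is at most the total size present, hence at most [OPT_t].  Only
   merges migrate items.  A mature bin of load [l < alpha] has lost at least
   [1 - alpha - l] to departures since it was last emptied, and
   [l <= alpha / (1 - 2 alpha) * (1 - alpha - l)]: charging each move to this
   departed size, used only once, bounds the migrated size by
   [alpha / (1 - 2 alpha)] times the total size. *)

(** * Sequences and sums *)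

Lemma filter_take (T : Type) (p : pred T) (s : seq T) k :
  filter p (take k s) = take (count p (take k s)) (filter p s).
Proof.
elim: s k => [|x s IH] [|k] //=; case: (p x) => /=; rewrite ?add0n ?IH ?take0 //.
Qed.

Lemma take_count_sorted (T : eqType) (r : rel T) (P : pred T) (s : seq T) :
  transitive r -> (forall x y, r x y -> P y -> P x) -> sorted r s ->
  take (count P s) s = filter P s.
Proof.
move=> r_trans P_down; elim: s => //= x s IH s_sorted.
case Px: (P x) => /=; first by rewrite IH ?(path_sorted s_sorted).
have notP : {in s, P =1 pred0}.
  move=> y ys /=; apply/negbTE/negP => Py.
  have /allP/(_ y ys) xy := order_path_min r_trans s_sorted.
  by rewrite (P_down _ _ xy Py) in Px.
by rewrite (eq_in_count notP) count_pred0 (eq_in_filter notP) filter_pred0.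
Qed.

Lemma nth_notin_take (T : eqType) (x0 : T) (s : seq T) k :
  uniq s -> (k < size s)%N -> nth x0 s k \notin take k s.
Proof. by move=> s_uniq lt_ks; rewrite in_take ?mem_nth // index_uniq //; lia. Qed.

Lemma sum_D1_cond (T : eqType) (V : nmodType) (r : seq T) (P : pred T) (F : T -> V) j :
  uniq r -> j \in r ->
  \sum_(i <- r | P i) F i = (if P j then F j else 0) + \sum_(i <- r | P i && (i != j)) F i.
Proof.
move=> r_uniq jr; rewrite big_mkcond (bigD1_seq j) //=; congr (_ + _).
rewrite [RHS]big_mkcond [LHS]big_mkcond.
by apply: eq_bigr => i _; case: (P i); case: (i != j).
Qed.

Lemma sum_nat_with (V : zmodType) (f : nat -> V) m b v : (b < m)%N ->
  \sum_(0 <= x < m) [eta f with b |-> v] x = \sum_(0 <= x < m) f x - f b + v.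
Proof.
move=> lt_bm; have bm : b \in index_iota 0 m by rewrite mem_index_iota.
rewrite !(@sum_D1_cond _ _ _ predT _ b) ?iota_uniq //= eqxx.
under eq_bigr => i /negbTE ne_ib do rewrite ne_ib.
by rewrite [f b + _]addrC addrK addrC.
Qed.

Lemma sum_nat_widen_cond (V : nmodType) m n (P : pred nat) (F G : nat -> V) :
  (m <= n)%N -> (forall i, P i -> (i < m)%N) -> (forall i, (i < m)%N -> F i = G i) ->
  \sum_(0 <= i < m | P i) F i = \sum_(0 <= i < n | P i) G i.
Proof.
move=> le_mn P_lt FG; rewrite (big_nat_widen _ _ _ _ _ le_mn).
by apply: eq_big => [i|i /andP[_ /FG //]]; case: (boolP (P i)) => //= /P_lt ->.
Qed.

Lemma sum_partition_seq (T U : eqType) (V : nmodType) (r : seq T) (rb : seq U)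
    (P : pred T) (f : T -> U) (F : T -> V) :
  uniq rb -> (forall i, i \in r -> P i -> f i \in rb) ->
  \sum_(i <- r | P i) F i = \sum_(b <- rb) \sum_(i <- r | P i && (f i == b)) F i.
Proof.
move=> rb_uniq f_rb.
under [RHS]eq_bigr => b _ do rewrite big_mkcond.
rewrite exchange_big big_mkcond /=; apply: eq_big_seq => i ir.
case Pi: (P i) => /=; last by rewrite big1.
rewrite -big_mkcond (@sum_D1_cond _ _ rb (fun b => f i == b) (fun _ => F i) (f i)) ?eqxx ?f_rb //.
by rewrite big1 ?addr0 // => b /andP[/eqP ->]; rewrite eqxx.
Qed.

Lemma sum_ge_const (T : eqType) (V : numDomainType) (U : seq T) (L : T -> V) (a : V) :
  (forall b, b \in U -> a <= L b) -> a * (size U)%:R <= \sum_(b <- U) L b.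
Proof.
elim: U => [|x U IH] a_le; first by rewrite big_nil mulr0.
rewrite big_cons /= -nat1r mulrDr mulr1 lerD ?a_le ?mem_head // IH // => b bU.
by rewrite a_le // in_cons bU orbT.
Qed.

Lemma sum_ge_all_but_one (T : eqType) (V : realDomainType) (U : seq T) (L : T -> V) (a : V) :
  0 <= a -> uniq U -> (forall b, b \in U -> 0 <= L b) ->
  (forall b1 b2, b1 \in U -> b2 \in U -> L b1 < a -> L b2 < a -> b1 = b2) ->
  a * ((size U)%:R - 1) <= \sum_(b <- U) L b.
Proof.
move=> a_ge0; elim: U => [|x U IH] /=; first by rewrite big_nil mulr0n sub0r mulrN1 oppr_le0.
case/andP=> xU U_uniq L_ge0 small_uniq.
have sub_U b : b \in U -> b \in x :: U by rewrite in_cons => ->; rewrite orbT.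
rewrite big_cons -nat1r addrAC subrr add0r.
case: (ltP (L x) a) => [small_x|large_x].
  have: a * (size U)%:R <= \sum_(b <- U) L b.
    apply: sum_ge_const => b bU; rewrite leNgt; apply/negP => small_b.
    have eb := small_uniq b x (sub_U b bU) (mem_head _ _) small_b small_x.
    by move: xU; rewrite -eb bU.
  by have := L_ge0 x (mem_head _ _); lra.
have: a * ((size U)%:R - 1) <= \sum_(b <- U) L b.
  apply: IH => // [b bU|b1 b2 b1U b2U]; first exact: L_ge0 (sub_U b bU).
  exact: small_uniq (sub_U b1 b1U) (sub_U b2 b2U).
by rewrite mulrBr mulr1; lra.
Qed.

(** * Events of an instance *)

Lemma ev_le_trans : transitive ev_le.
Proof.
move=> [[y ky] iy] [[x kx] ix] [[z kz] iz]; rewrite /ev_le /=.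
case/orP=> [h1|/andP[/eqP e1 h1]]; case/orP=> [h2|/andP[/eqP e2 h2]].
- by rewrite (lt_trans h1 h2).
- by subst; rewrite h1.
- by subst; rewrite h2.
- by subst; rewrite eqxx /= lt_irreflexive /=; move: h1 h2; lia.
Qed.

Lemma ev_le_total : total ev_le.
Proof. by move=> [[x kx] ix] [[y ky] iy]; rewrite /ev_le /=; case: (ltgtP x y) => //= _; lia. Qed.

Lemma ev_le_time e1 e2 : ev_le e1 e2 -> ev_time e1 <= ev_time e2.
Proof. by rewrite /ev_le /ev_time; case/orP=> [/ltW //|/andP[/eqP -> _]]. Qed.

Definition is_arrival (e : rawev) : bool := e.1.2 == 1%N.

Lemma arr_ev_inj I : injective (arr_ev I).
Proof. by move=> i j [] _ ->. Qed.

Lemma dep_ev_inj I : injective (dep_ev I).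
Proof. by move=> i j [] _ ->. Qed.

Lemma dep_ev_neq_arr_ev I i j : (dep_ev I i == arr_ev I j) = false.
Proof. by apply/negbTE/eqP => -[]. Qed.

Section Events.
Variable I : seq item.
Hypothesis I_valid : valid_instance I.
Local Notation n := (size I).
Local Notation ev := (events I).

Lemma events_cases e : e \in ev ->
  (exists2 i, (i < n)%N & e = dep_ev I i) \/ (exists2 i, (i < n)%N & e = arr_ev I i).
Proof.
rewrite mem_sort mem_cat.
by case/orP=> /mapP[i]; rewrite mem_iota add0n => /andP[_ lt_in] ->; [left|right]; exists i.
Qed.

Lemma arr_ev_in_events i : (i < n)%N -> arr_ev I i \in ev.
Proof. by move=> lt_in; rewrite mem_sort mem_cat map_f ?orbT // mem_iota. Qed.

Lemma dep_ev_in_events i : (i < n)%N -> dep_ev I i \in ev.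
Proof. by move=> lt_in; rewrite mem_sort mem_cat map_f // mem_iota. Qed.

Lemma arr_ev_in_eventsP i : (arr_ev I i \in ev) = (i < n)%N.
Proof.
by apply/idP/idP => [/events_cases[][j lt_jn][]|/arr_ev_in_events] // _ ->.
Qed.

Lemma dep_ev_in_eventsP i : (dep_ev I i \in ev) = (i < n)%N.
Proof.
by apply/idP/idP => [/events_cases[][j lt_jn][]|/dep_ev_in_events] // _ ->.
Qed.

Lemma uniq_events : uniq ev.
Proof.
rewrite sort_uniq cat_uniq !map_inj_uniq ?iota_uniq //=;
  [|exact: arr_ev_inj|exact: dep_ev_inj].
by rewrite andbT; apply/hasPn => _ /mapP[i _ ->]; apply/negP => /mapP[j _] [].
Qed.

Lemma sorted_events : sorted ev_le ev.
Proof. exact: sort_sorted ev_le_total _. Qed.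

(* The instance lists items by arrival time, so arrivals happen in index order. *)
Lemma sorted_arrivals : sorted ev_le [seq arr_ev I i | i <- iota 0 n].
Proof.
case: I_valid => _ I_sorted.
apply/(sortedP (arr_ev I 0)) => k; rewrite size_map size_iota => lt_k1n.
rewrite !(nth_map 0%N) ?size_iota ?nth_iota; try lia.
have arr_trans : transitive (fun x y : item => arr x <= arr y).
  by move=> ? ? ?; apply: le_trans.
have arr_le := sorted_ltn_nth arr_trans dflt_item I_sorted.
have := arr_le k k.+1; rewrite !inE => /(_ _ _ (ltnSn k)).
rewrite /ev_le /= !add0n le_eqVlt => /(_ ltac:(lia) ltac:(lia)) /orP[/eqP ->|->] //.
by rewrite eqxx /=; lia.
Qed.

Lemma filter_arrivals_events : filter is_arrival ev = [seq arr_ev I i | i <- iota 0 n].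
Proof.
rewrite filter_sort; [|exact: ev_le_total|exact: ev_le_trans].
rewrite filter_cat (@eq_in_filter _ _ pred0) ?filter_pred0; last by move=> _ /mapP[i _ ->].
rewrite (@eq_in_filter _ _ predT) ?filter_predT; last by move=> _ /mapP[i _ ->].
by rewrite /= sorted_sort //; [exact: ev_le_trans|exact: sorted_arrivals].
Qed.

Lemma arr_ev_in_take i k : (i < n)%N ->
  (arr_ev I i \in take k ev) = (i < count is_arrival (take k ev))%N.
Proof.
move=> lt_in.
have -> : (arr_ev I i \in take k ev) = (arr_ev I i \in filter is_arrival (take k ev)).
  by rewrite mem_filter.
rewrite filter_take filter_arrivals_events.
by rewrite -map_take take_iota (mem_map (@arr_ev_inj I)) mem_iota; lia.
Qed.

Lemma count_arrivals_take k : (count is_arrival (take k ev) <= n)%N.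
Proof.
rewrite -[X in (_ <= X)%N](size_iota 0) -(size_map (arr_ev I)) -filter_arrivals_events.
by rewrite size_filter -[in X in (_ <= X)%N](cat_take_drop k ev) count_cat leq_addr.
Qed.

Lemma arr_ev_in_take_dep i k : dep_ev I i \in take k ev -> arr_ev I i \in take k ev.
Proof.
move=> dep_in.
have lt_in : (i < n)%N by rewrite -dep_ev_in_eventsP (mem_take dep_in).
have arr_in := arr_ev_in_events lt_in; have dep_in' := dep_ev_in_events lt_in.
move: dep_in; rewrite !in_take //.
case: (ltngtP (index (arr_ev I i) ev) (index (dep_ev I i) ev)) => lt_da; try lia.
have := sorted_ltn_nth ev_le_trans (arr_ev I i) sorted_events.
move=> /(_ (index (dep_ev I i) ev) (index (arr_ev I i) ev)).
rewrite !inE !index_mem => /(_ dep_in' arr_in lt_da).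
rewrite !nth_index // => /ev_le_time; rewrite /ev_time /=.
by case: I_valid => /(_ i lt_in) [_ [_ dur_gt0]] _; lra.
Qed.

Lemma take_count_time t :
  take (count (fun e => ev_time e <= t) ev) ev = filter (fun e => ev_time e <= t) ev.
Proof.
apply: take_count_sorted; [exact: ev_le_trans| |exact: sorted_events].
by move=> x y /ev_le_time; apply: le_trans.
Qed.

Lemma present_at_after t i : (i < n)%N ->
  present_at I t i = present_after I (count (fun e => ev_time e <= t) ev) i.
Proof.
move=> lt_in; rewrite /present_after take_count_time !mem_filter.
by rewrite arr_ev_in_events // dep_ev_in_events // /present_at /ev_time /= !andbT ltNge.
Qed.

End Events.

(** * The algorithm *)

Section Algorithm.
Variable alpha : R.

(* Items are named by arrival rank and the bins [>= fresh_bin s] are unused.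
   [credit s b] is the size departed from bin [b] since [b] was last emptied by
   a merge. *)
Record state := State {
  bin_of : nat -> nat;
  narrived : nat;
  gone : nat -> bool;
  size_of : nat -> R;
  mature : nat -> bool;
  fresh_bin : nat;
  filling_bin : nat;
  credit : nat -> R }.

Definition alive (s : state) i := (i < narrived s)%N && ~~ gone s i.

Definition load (s : state) b :=
  \sum_(0 <= i < narrived s | alive s i && (bin_of s i == b)) size_of s i.

Definition nonempty (s : state) b :=
  has (fun i => alive s i && (bin_of s i == b)) (index_iota 0 (narrived s)).

Definition light (s : state) b := nonempty s b && (load s b < alpha).

Definition add_item (s : state) b x :=
  State [eta bin_of s with narrived s |-> b] (narrived s).+1 (gone s)
    [eta size_of s with narrived s |-> x] (mature s) (fresh_bin s) (filling_bin s) (credit s).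

Definition set_bin_flags (s : state) m nb fb :=
  State (bin_of s) (narrived s) (gone s) (size_of s) m nb fb (credit s).

Definition remove_item (s : state) j :=
  State (bin_of s) (narrived s) [eta gone s with j |-> true] (size_of s) (mature s)
    (fresh_bin s) (filling_bin s)
    [eta credit s with bin_of s j |-> credit s (bin_of s j) + size_of s j].

Definition merge_bins (s : state) Y Z :=
  State (fun i => if bin_of s i == Y then Z else bin_of s i) (narrived s) (gone s)
    (size_of s) [eta mature s with Y |-> false] (fresh_bin s) (filling_bin s)
    [eta credit s with Y |-> 0].

Definition find_light (s : state) (q : pred nat) :=
  ohead [seq b <- iota 0 (fresh_bin s) | light s b && q b].

Definition arrive (s : state) (x : R) : state :=
  if alpha < x then
    set_bin_flags (add_item s (fresh_bin s) x) (mature s) (fresh_bin s).+1 (filling_bin s)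
  else match find_light s predT with
  | Some L => add_item s L x
  | None =>
      if nonempty s (filling_bin s) && (load s (filling_bin s) + x <= 1)
      then add_item s (filling_bin s) x
      else set_bin_flags (add_item s (fresh_bin s) x)
             (if nonempty s (filling_bin s)
              then [eta mature s with filling_bin s |-> true] : nat -> bool
              else mature s)
             (fresh_bin s).+1 (fresh_bin s)
  end.

Definition depart (s : state) (j : nat) : state :=
  let s' := remove_item s j in
  let B := bin_of s j in
  if light s' B then
    match find_light s' (fun b => b != B) with
    | Some X => if mature s' B then merge_bins s' B X else merge_bins s' X B
    | None => s'
    end
  else s'.

Definition step (s : state) (e : event) : state :=
  match e with Arrive _ x => arrive s x | Depart _ j => depart s j end.

Definition init_state :=
  State (fun _ => 0%N) 0 (fun _ => false) (fun _ => 0) (fun _ => false) 0 0 (fun _ => 0).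

Definition run (h : seq event) : state := foldl step init_state h.

Lemma nonemptyP s b : reflect (exists i, alive s i /\ bin_of s i = b) (nonempty s b).
Proof.
apply: (iffP hasP) => [[i _ /andP[si /eqP <-]]|[i [si <-]]]; first by exists i.
by exists i; rewrite ?si ?eqxx // mem_index_iota; case/andP: si.
Qed.

Lemma load_ge0 s b : (forall i, alive s i -> 0 <= size_of s i) -> 0 <= load s b.
Proof.
by move=> size_ge0; rewrite /load big_seq_cond; apply: sumr_ge0 => i /and3P[_ /size_ge0].
Qed.

Lemma load_empty s b : ~~ nonempty s b -> load s b = 0.
Proof.
move=> /hasPn empty_b; rewrite /load big_seq_cond big1 // => i /andP[ir si].
by have := empty_b i ir; rewrite si.
Qed.

Lemma size_of_le_load s i : (forall i, alive s i -> 0 <= size_of s i) -> alive s i ->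
  size_of s i <= load s (bin_of s i).
Proof.
move=> size_ge0 si; rewrite /load big_mkcond (bigD1_seq i) ?iota_uniq //=; last first.
  by rewrite mem_index_iota; case/andP: si.
rewrite si eqxx lerDl; apply: sumr_ge0 => k _; case: ifP => // /andP[/size_ge0 //].
Qed.

Lemma find_light_some s q b : find_light s q = Some b ->
  [/\ light s b, q b & (b < fresh_bin s)%N].
Proof.
rewrite /find_light; case E: [seq _ <- _ | _] => [|y l] //= [<-].
have : y \in [seq b <- iota 0 (fresh_bin s) | light s b && q b] by rewrite E mem_head.
by rewrite mem_filter mem_iota add0n => /andP[/andP[-> ->] /andP[_ ->]].
Qed.

Lemma find_light_none s q b : find_light s q = None -> (b < fresh_bin s)%N ->
  ~~ (light s b && q b).
Proof.
rewrite /find_light; case E: [seq _ <- _ | _] => [|y l] //= _ lt_b; apply/negP => lqb.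
have : b \in [seq b <- iota 0 (fresh_bin s) | light s b && q b].
  by rewrite mem_filter lqb mem_iota.
by rewrite E.
Qed.

Section AddItem.
Variables (s : state) (b : nat) (x : R).
Hypothesis new_not_gone : ~~ gone s (narrived s).

Lemma alive_add_item i : alive (add_item s b x) i = alive s i || (i == narrived s).
Proof.
rewrite /alive /= ltnS leq_eqVlt orbC.
by case: (eqVneq i (narrived s)) => [->|ne_i] /=; rewrite ?ltnn ?new_not_gone ?orbF.
Qed.

Lemma alive_add_item_old i : alive s i -> (i == narrived s) = false.
Proof. by case/andP=> lt_i _; rewrite ltn_eqF. Qed.

Lemma bin_of_add_item i : alive s i -> bin_of (add_item s b x) i = bin_of s i.
Proof. by move=> si; rewrite /= alive_add_item_old. Qed.

Lemma load_add_item c : load (add_item s b x) c = load s c + (if c == b then x else 0).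
Proof.
rewrite /load /= !big_mkcond big_nat_recr //=; congr (_ + _).
  rewrite [RHS]big_mkcond; apply: eq_big_nat => i /andP[_ lt_i].
  by rewrite alive_add_item ltn_eqF // orbF.
by rewrite alive_add_item eqxx orbT /= eq_sym; case: (c == b).
Qed.

Lemma nonempty_add_item c : nonempty (add_item s b x) c = nonempty s c || (c == b).
Proof.
apply/nonemptyP/orP => [[i []]|[/nonemptyP[i [si <-]]|/eqP ->]].
- rewrite alive_add_item => /orP[si|/eqP ->]; last by rewrite /= eqxx => ->; right.
  by rewrite bin_of_add_item // => <-; left; apply/nonemptyP; exists i.
- by exists i; rewrite alive_add_item si bin_of_add_item.
- by exists (narrived s); rewrite alive_add_item eqxx orbT /= eqxx.
Qed.

Lemma light_add_item c :
  light (add_item s b x) c = if c == b then load s b + x < alpha else light s c.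
Proof.
rewrite /light nonempty_add_item load_add_item.
by case: (eqVneq c b) => [->|_] /=; rewrite ?orbT ?orbF ?addr0.
Qed.

End AddItem.

Section RemoveItem.
Variables (s : state) (j : nat).
Hypothesis j_alive : alive s j.

Lemma alive_remove_item i : alive (remove_item s j) i = alive s i && (i != j).
Proof. by rewrite /alive /=; case: eqP => [->|]; rewrite ?andbF ?andbT. Qed.

Lemma load_remove_item c :
  load (remove_item s j) c = load s c - (if c == bin_of s j then size_of s j else 0).
Proof.
rewrite /load /= [in RHS](@sum_D1_cond _ _ _ _ _ j) ?iota_uniq //; last first.
  by rewrite mem_index_iota; case/andP: j_alive.
rewrite j_alive /= eq_sym.
under eq_bigl => i do rewrite alive_remove_item andbAC.
by case: (c == bin_of s j) => /=; lra.
Qed.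

Lemma nonempty_remove_item c : nonempty (remove_item s j) c -> nonempty s c.
Proof.
by case/nonemptyP=> i []; rewrite alive_remove_item => /andP[si _] <-; apply/nonemptyP; exists i.
Qed.

Lemma nonempty_remove_item_neq c : c != bin_of s j -> nonempty (remove_item s j) c = nonempty s c.
Proof.
move=> ne_c; apply/idP/idP; first exact: nonempty_remove_item.
case/nonemptyP=> i [si ei]; apply/nonemptyP; exists i; split => //.
by rewrite alive_remove_item si; apply: contraNneq ne_c => eij; rewrite -ei eij.
Qed.

Lemma light_remove_item_neq c : c != bin_of s j -> light (remove_item s j) c = light s c.
Proof.
by move=> ne_c; rewrite /light nonempty_remove_item_neq // load_remove_item (negbTE ne_c) subr0.
Qed.

End RemoveItem.

Section MergeBins.
Variables (s : state) (Y Z : nat).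
Hypothesis neq_YZ : Y != Z.

Lemma load_merge_bins c : load (merge_bins s Y Z) c =
  if c == Y then 0 else if c == Z then load s Z + load s Y else load s c.
Proof.
rewrite /load /=; case: (eqVneq c Y) => [->|ne_cY].
  rewrite big1 // => i; case: ifP => [_|/negbT ne_iY].
    by rewrite eq_sym (negbTE neq_YZ) andbF.
  by rewrite (negbTE ne_iY) andbF.
case: (eqVneq c Z) => [->|ne_cZ].
  rewrite !(big_mkcond (fun i => alive _ i && _)) -big_split /=; apply: eq_bigr => i _.
  rewrite /alive /=; case: (eqVneq (bin_of s i) Y) => [->|_].
    by rewrite eqxx (negbTE neq_YZ) andbF andbT add0r.
  by rewrite andbF addr0.
apply: eq_bigl => i; case: ifP => [/eqP ->|//].
by rewrite !(eq_sym _ c) (negbTE ne_cY) (negbTE ne_cZ) !andbF.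
Qed.

Lemma nonempty_merge_bins c : nonempty (merge_bins s Y Z) c =
  if c == Y then false else if c == Z then nonempty s Z || nonempty s Y else nonempty s c.
Proof.
case: (eqVneq c Y) => [->|ne_cY].
  apply/negbTE/nonemptyP => -[i [_ /=]]; case: eqP => // _ eZY.
  by move: neq_YZ; rewrite eZY eqxx.
case: (eqVneq c Z) => [->|ne_cZ].
  apply/nonemptyP/orP => [[i [si /=]]|[|]/nonemptyP[i [si ei]]].
  - by case: ifP => [/eqP eY _|_ eZ]; [right|left]; apply/nonemptyP; exists i.
  - by exists i; split => //=; rewrite ei; case: eqP.
  - by exists i; split => //=; rewrite ei eqxx.
apply/nonemptyP/nonemptyP => [[i [si /=]]|[i [si ei]]].
  by case: ifP => [_ eZ|_ ei]; [move: ne_cZ; rewrite eZ eqxx|exists i].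
by exists i; split => //=; rewrite ei (negbTE ne_cY).
Qed.

End MergeBins.

(** * Invariants *)

(* Between a departure and the ensuing merge there may be two light bins, hence
   this invariant without uniqueness of the light bin. *)
Record core_invariant (s : state) : Prop := CoreInvariant {
  size_of_bounds : forall i, alive s i -> 0 <= size_of s i <= 1;
  bin_of_lt_fresh : forall i, alive s i -> (bin_of s i < fresh_bin s)%N;
  fresh_unused : forall b, (fresh_bin s <= b)%N -> mature s b = false /\ credit s b = 0;
  credit_ge0 : forall b, 0 <= credit s b;
  load_le1 : forall b, load s b <= 1;
  only_large_items : forall b, nonempty s b -> ~~ mature s b -> b != filling_bin s ->
    forall i, alive s i -> bin_of s i = b -> alpha < size_of s i;
  mature_credit : forall b, mature s b -> 1 - alpha <= credit s b + load s b;
  gone_lt_narrived : forall i, gone s i -> (i < narrived s)%N }.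

Record packing_invariant (s : state) : Prop := Invariant {
  invariant_core :> core_invariant s;
  light_unique : forall b1 b2, light s b1 -> light s b2 -> b1 = b2 }.

Hypothesis alpha_gt0 : 0 < alpha.
Hypothesis alpha_lt_half : alpha + alpha < 1.

Section Core.
Variable s : state.
Hypothesis s_core : core_invariant s.

Lemma size_of_ge0 i : alive s i -> 0 <= size_of s i.
Proof. by move/(size_of_bounds s_core)/andP=> []. Qed.

Lemma nonempty_lt_fresh b : nonempty s b -> (b < fresh_bin s)%N.
Proof. by case/nonemptyP=> i [si <-]; apply: bin_of_lt_fresh s_core i si. Qed.

Lemma light_lt_fresh b : light s b -> (b < fresh_bin s)%N.
Proof. by case/andP=> /nonempty_lt_fresh. Qed.

Lemma mature_lt_fresh b : mature s b -> (b < fresh_bin s)%N.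
Proof. by rewrite ltnNge; apply: contraTN => /(fresh_unused s_core) [->]. Qed.

Lemma new_item_not_gone : ~~ gone s (narrived s).
Proof. by apply/negP => /(gone_lt_narrived s_core); rewrite ltnn. Qed.

Lemma load_fresh : load s (fresh_bin s) = 0.
Proof. by rewrite load_empty //; apply/negP => /nonempty_lt_fresh; rewrite ltnn. Qed.

(* A light bin holds at least one small item, so it is mature or filling. *)
Lemma light_filling b : light s b -> ~~ mature s b -> b = filling_bin s.
Proof.
case/andP=> /[dup] /nonemptyP[i [si <-]] ne_b lt_load not_mature.
apply/eqP; apply: contraTT lt_load => not_filling; rewrite -leNgt.
apply: le_trans (size_of_le_load size_of_ge0 si); apply: ltW.
exact: only_large_items s_core _ ne_b not_mature not_filling i si erefl.
Qed.

End Core.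

Lemma invariant_add_item s (x : R) b m nb fb :
  packing_invariant s -> 0 <= x <= 1 ->
  (b < nb)%N -> (fresh_bin s <= nb)%N -> (forall c, (nb <= c)%N -> m c = false) ->
  load s b + x <= 1 ->
  (forall c, m c -> 1 - alpha <= credit s c + load s c + (if c == b then x else 0)) ->
  (forall c1 c2, light (add_item s b x) c1 -> light (add_item s b x) c2 -> c1 = c2) ->
  (forall c, nonempty s c -> ~~ m c -> c != fb -> ~~ mature s c && (c != filling_bin s)) ->
  (~~ m b -> b != fb -> alpha < x) ->
  packing_invariant (set_bin_flags (add_item s b x) m nb fb).
Proof.
move=> s_inv x_bounds lt_b le_nb m_fresh load_b m_credit light_uniq large_old large_new.
have new := new_item_not_gone s_inv.
set s' := set_bin_flags _ _ _ _.
have aliveE i : alive s' i = alive s i || (i == narrived s) by apply: alive_add_item.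
have loadE c : load s' c = load s c + (if c == b then x else 0) by apply: load_add_item.
have old i : alive s i -> (i == narrived s) = false by apply: alive_add_item_old.
split => //; split.
- move=> i; rewrite aliveE => /orP[si|/eqP ->]; rewrite /= ?eqxx //.
  by rewrite old //; apply: size_of_bounds s_inv i si.
- move=> i; rewrite aliveE => /orP[si|/eqP ->]; rewrite /= ?eqxx //.
  by rewrite old //; apply: leq_trans le_nb; apply: bin_of_lt_fresh s_inv i si.
- move=> c le_c; split; first exact: m_fresh.
  by case: (fresh_unused s_inv (leq_trans le_nb le_c)).
- exact: credit_ge0 s_inv.
- by move=> c; rewrite loadE; case: eqP => [->//|_]; rewrite addr0 (load_le1 s_inv).
- move=> c ne_c not_m not_fb i; rewrite aliveE => /orP[si|/eqP ->]; last first.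
    by rewrite /= eqxx => eb; subst; apply: large_new.
  rewrite /= old // => ei.
  have ne_c' : nonempty s c by apply/nonemptyP; exists i.
  case/andP: (large_old c ne_c' not_m not_fb) => nm nf.
  exact: only_large_items s_inv c ne_c' nm nf i si ei.
- by move=> c /m_credit; rewrite loadE addrA.
- by move=> i /(gone_lt_narrived s_inv) /ltnW.
Qed.

Section Arrive.
Variables (s : state) (x : R).
Hypothesis s_inv : packing_invariant s.
Hypothesis x_bounds : 0 <= x <= 1.

Let x_ge0 : 0 <= x. Proof. by case/andP: x_bounds. Qed.
Let x_le1 : x <= 1. Proof. by case/andP: x_bounds. Qed.
Let new_not_gone : ~~ gone s (narrived s). Proof. exact: new_item_not_gone s_inv. Qed.

Let fresh_not_mature c : (fresh_bin s <= c)%N -> mature s c = false.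
Proof. by case/(fresh_unused s_inv). Qed.

Let light_add_small L : light s L -> x <= alpha ->
  forall c, light (add_item s L x) c -> c = L.
Proof.
move=> light_L le_x c; rewrite light_add_item //.
by case: (eqVneq c L) => // _ /(light_unique s_inv) /(_ light_L).
Qed.

Lemma invariant_arrive_large : alpha < x ->
  packing_invariant
    (set_bin_flags (add_item s (fresh_bin s) x) (mature s) (fresh_bin s).+1 (filling_bin s)).
Proof.
move=> lt_x; apply: invariant_add_item => //.
- by move=> c /ltnW; apply: fresh_not_mature.
- by rewrite (load_fresh s_inv) add0r.
- move=> c /[dup] /(mature_lt_fresh s_inv) /ltn_eqF -> /(mature_credit s_inv).
  by rewrite addr0.
- have not_light_new : load s (fresh_bin s) + x < alpha = false.
    by rewrite (load_fresh s_inv) add0r ltNge (ltW lt_x).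
  move=> c1 c2; rewrite !light_add_item //.
  case: eqP => [_|_]; first by rewrite not_light_new.
  case: eqP => [_|_]; first by rewrite not_light_new.
  exact: (light_unique s_inv).
- by move=> c _ -> ->.
Qed.

Lemma invariant_arrive_light L : light s L -> x <= alpha -> packing_invariant (add_item s L x).
Proof.
move=> light_L le_x.
have /andP[_ lt_L] := light_L.
apply: (@invariant_add_item _ _ _ (mature s) (fresh_bin s) (filling_bin s)) => //.
- by case/andP: light_L => /(nonempty_lt_fresh s_inv).
- by have := alpha_lt_half; lra.
- by move=> c /(mature_credit s_inv) /le_trans; apply; rewrite lerDl; case: ifP.
- by move=> c1 c2 /light_add_small -> // /light_add_small ->.
- by move=> c _ -> ->.
- by move=> not_m; rewrite (light_filling s_inv light_L not_m) eqxx.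
Qed.

Hypothesis no_light : forall b, ~~ light s b.

Lemma invariant_arrive_filling :
  nonempty s (filling_bin s) -> load s (filling_bin s) + x <= 1 ->
  packing_invariant (add_item s (filling_bin s) x).
Proof.
move=> ne_fb load_fb.
apply: (@invariant_add_item _ _ _ (mature s) (fresh_bin s) (filling_bin s)) => //.
- exact: nonempty_lt_fresh s_inv _ ne_fb.
- by move=> c /(mature_credit s_inv) /le_trans; apply; rewrite lerDl; case: ifP.
- move=> c1 c2; rewrite !light_add_item // !(negbTE (no_light _)).
  by case: eqP => // ->; case: eqP.
- by move=> c _ -> ->.
- by rewrite eqxx.
Qed.

(* The old filling bin becomes mature: the rejected small item shows that its
   load exceeds [1 - alpha]. *)
Lemma invariant_arrive_new_filling : x <= alpha ->
  ~~ (nonempty s (filling_bin s) && (load s (filling_bin s) + x <= 1)) ->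
  packing_invariant (set_bin_flags (add_item s (fresh_bin s) x)
    (if nonempty s (filling_bin s) then [eta mature s with filling_bin s |-> true] : nat -> bool
     else mature s) (fresh_bin s).+1 (fresh_bin s)).
Proof.
move=> le_x not_fits; apply: invariant_add_item => //.
- move=> c lt_c; have le_c := ltnW lt_c.
  case: ifP => [ne_fb|_]; last exact: fresh_not_mature.
  rewrite /=; case: eqP => [e|_]; last exact: fresh_not_mature.
  by move: (nonempty_lt_fresh s_inv ne_fb); rewrite -e ltnNge le_c.
- by rewrite (load_fresh s_inv) add0r.
- move=> c; case: ifP => [ne_fb|_] m_c; last first.
    by rewrite (ltn_eqF (mature_lt_fresh s_inv m_c)) addr0 (mature_credit s_inv).
  move: m_c; rewrite /=; case: (eqVneq c (filling_bin s)) => [->|_] m_c.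
    rewrite (ltn_eqF (nonempty_lt_fresh s_inv ne_fb)) addr0.
    have := credit_ge0 s_inv (filling_bin s); move: not_fits; rewrite ne_fb -ltNge /=.
    lra.
  by rewrite (ltn_eqF (mature_lt_fresh s_inv m_c)) addr0 (mature_credit s_inv).
- move=> c1 c2; rewrite !light_add_item // !(negbTE (no_light _)).
  by case: eqP => // ->; case: eqP.
- move=> c ne_c; case: ifP => [ne_fb|ne_fb] /=.
    by case: (eqVneq c (filling_bin s)) => // _ ->.
  by move=> -> _ /=; apply: (contraFneq _ ne_fb) => <-.
- by rewrite eqxx.
Qed.

End Arrive.

Lemma invariant_arrive s x : packing_invariant s -> 0 <= x <= 1 -> packing_invariant (arrive s x).
Proof.
move=> s_inv x_bounds; rewrite /arrive; case: ltP => [lt_x|le_x].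
  exact: invariant_arrive_large.
case E: find_light => [L|].
  by case/find_light_some: E => light_L _ _; apply: invariant_arrive_light.
have no_light b : ~~ light s b.
  apply/negP => light_b.
  by have := find_light_none E (light_lt_fresh s_inv light_b); rewrite light_b.
case: ifP => [/andP[ne_fb fits]|/negbT not_fits].
  exact: invariant_arrive_filling.
exact: invariant_arrive_new_filling.
Qed.

Lemma core_remove_item s j : core_invariant s -> alive s j -> core_invariant (remove_item s j).
Proof.
move=> s_core sj; have lt_j := bin_of_lt_fresh s_core sj.
have /andP[size_j_ge0 _] := size_of_bounds s_core sj.
split.
- by move=> i; rewrite alive_remove_item => /andP[si _]; apply: size_of_bounds s_core i si.
- by move=> i; rewrite alive_remove_item => /andP[si _]; apply: bin_of_lt_fresh s_core i si.
- move=> b le_b /=; case: eqP => [e|_]; last exact: fresh_unused s_core b le_b.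
  by move: lt_j; rewrite -e ltnNge le_b.
- move=> b /=; case: ifP => _; last exact: credit_ge0 s_core b.
  exact: addr_ge0 (credit_ge0 s_core _) size_j_ge0.
- move=> b; rewrite load_remove_item //; apply: le_trans (load_le1 s_core b).
  by case: ifP => _; rewrite ?subr0 // lerBlDr lerDl.
- move=> b /nonempty_remove_item ne_b m_b fb_b i; rewrite alive_remove_item => /andP[si _].
  exact: only_large_items s_core b ne_b m_b fb_b i si.
- move=> b /= m_b; have := mature_credit s_core m_b; rewrite load_remove_item //.
  by case: (eqVneq b (bin_of s j)) => [->|_]; rewrite ?subr0 //; lra.
- by move=> i /=; case: eqP => [->|_ /(gone_lt_narrived s_core)] //; case/andP: sj.
Qed.

Lemma invariant_merge_bins s Y Z : core_invariant s -> Y != Z ->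
  light s Y -> light s Z -> mature s Y -> (forall c, light s c -> c = Y \/ c = Z) ->
  packing_invariant (merge_bins s Y Z).
Proof.
move=> s_core ne_YZ /andP[_ lt_Y] light_Z m_Y light_YZ.
have /andP[_ lt_Z] := light_Z.
have loadE := load_merge_bins s ne_YZ; have nonemptyE := nonempty_merge_bins s ne_YZ.
have light_merge c : light (merge_bins s Y Z) c -> c = Z.
  rewrite /light loadE nonemptyE; case: eqP => // /eqP ne_cY; case: eqP => // /eqP ne_cZ.
  by case/light_YZ => /eqP; rewrite ?(negbTE ne_cY) ?(negbTE ne_cZ).
split; last by move=> c1 c2 /light_merge -> /light_merge ->.
split.
- exact: size_of_bounds s_core.
- move=> i si /=; case: ifP => _; last exact: bin_of_lt_fresh s_core i si.
  exact: light_lt_fresh s_core _ light_Z.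
- by move=> b le_b /=; case: ifP => _ //; apply: fresh_unused s_core b le_b.
- by move=> b /=; case: ifP => _ //; apply: credit_ge0.
- move=> b; rewrite loadE; case: ifP => _; first exact: ler01.
  by case: ifP => _; [have := alpha_lt_half; lra|apply: load_le1].
- move=> b; rewrite nonemptyE; case: (eqVneq b Y) => [//|ne_bY].
  case: (eqVneq b Z) => [->|ne_bZ] ne_b /=.
    rewrite eq_sym (negbTE ne_YZ) => not_m /negP[].
    by rewrite (light_filling s_core light_Z not_m).
  rewrite (negbTE ne_bY) => not_m not_fb i si.
  case: ifP => [_ eZ|_ ei]; first by rewrite eZ eqxx in ne_bZ.
  exact: only_large_items s_core b ne_b not_m not_fb i si ei.
- move=> b /=; case: ifP => // ne_bY m_b; have := mature_credit s_core m_b.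
  rewrite loadE ne_bY; case: ifP => [/eqP ->|_] //.
  by have := load_ge0 Y (size_of_ge0 s_core); lra.
- exact: gone_lt_narrived s_core.
Qed.

Variant depart_spec (s' : state) : state -> Prop :=
| DepartRemove of (forall b1 b2, light s' b1 -> light s' b2 -> b1 = b2) :
    depart_spec s' s'
| DepartMerge Y Z of Y != Z & light s' Y & light s' Z & mature s' Y &
    (forall c, light s' c -> c = Y \/ c = Z) : depart_spec s' (merge_bins s' Y Z).

Lemma departP s j : packing_invariant s -> alive s j -> depart_spec (remove_item s j) (depart s j).
Proof.
move=> s_inv sj; have s'_core := core_remove_item s_inv sj.
set s' := remove_item s j; set B := bin_of s j.
rewrite /depart; case: ifP => [light_B|not_light_B]; last first.
  have light_old c : light s' c -> light s c.
    by case: (eqVneq c B) => [->|ne_cB]; rewrite ?not_light_B // (light_remove_item_neq sj).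
  by constructor=> c1 c2 /light_old l1 /light_old l2; apply: light_unique s_inv _ _ l1 l2.
case E: find_light => [X|]; last first.
  suff only_B c : light s' c -> c = B by constructor=> c1 c2 /only_B -> /only_B ->.
  move=> light_c; apply/eqP; apply: contraNT (find_light_none E (light_lt_fresh s'_core light_c)).
  by move=> ne_cB; rewrite light_c.
case/find_light_some: E => light_X ne_XB _.
have light_X_s : light s X by rewrite -(light_remove_item_neq sj).
have light_BX c : light s' c -> c = B \/ c = X.
  case: (eqVneq c B) => [->|ne_cB]; first by left.
  rewrite (light_remove_item_neq sj) // => light_c; right.
  exact: light_unique s_inv _ _ light_c light_X_s.
case: ifP => m_B; first by constructor; rewrite // eq_sym.
have m_X : mature s' X.
  apply: contraNT ne_XB => not_m_X.
  by rewrite (light_filling s'_core light_X not_m_X) (light_filling s'_core light_B (negbT m_B)).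
by constructor=> // c /light_BX [] ->; [right|left].
Qed.

Lemma invariant_depart s j : packing_invariant s -> alive s j -> packing_invariant (depart s j).
Proof.
move=> s_inv sj; have s'_core := core_remove_item s_inv sj.
case: (departP s_inv sj) => [light_uniq|Y Z ne_YZ light_Y light_Z m_Y light_YZ].
  exact: Invariant.
exact: invariant_merge_bins.
Qed.

Lemma invariant_init : packing_invariant init_state.
Proof.
have load0 b : load init_state b = 0 by rewrite /load big_geq.
by split=> //; split=> // b; rewrite load0 ler01.
Qed.

(** * Migration cost *)

Definition credit_total s := \sum_(0 <= b < fresh_bin s) credit s b.

Definition migration (s s' : state) :=
  \sum_(0 <= i < narrived s | [&& alive s i, alive s' i & bin_of s i != bin_of s' i])
    size_of s i.

Lemma arrive_fields s x :
  [/\ narrived (arrive s x) = (narrived s).+1, gone (arrive s x) = gone s,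
      size_of (arrive s x) = [eta size_of s with narrived s |-> x],
      credit (arrive s x) = credit s &
      forall i, alive s i -> bin_of (arrive s x) i = bin_of s i].
Proof.
have old b i : alive s i -> bin_of (add_item s b x) i = bin_of s i.
  by case/andP=> lt_i _; rewrite /= ltn_eqF.
rewrite /arrive; case: ifP => _; first by split=> // i; apply: old.
case: find_light => [L|]; first by split=> // i; apply: old.
by case: ifP => _; split=> // i; apply: old.
Qed.

Lemma migration_arrive s x : migration s (arrive s x) = 0.
Proof.
have [_ _ _ _ bin_old] := arrive_fields s x.
by rewrite /migration big1 // => i /and3P[si _]; rewrite bin_old // eqxx.
Qed.

Lemma credit_total_arrive s x : packing_invariant s -> credit_total (arrive s x) = credit_total s.
Proof.
move=> s_inv; have [_ _ _ creditE _] := arrive_fields s x.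
rewrite /credit_total creditE /arrive; case: ifP => _ /=.
  by rewrite big_nat_recr //= (proj2 (fresh_unused s_inv (leqnn _))) addr0.
case: find_light => [L|] //; case: ifP => _ //=.
by rewrite big_nat_recr //= (proj2 (fresh_unused s_inv (leqnn _))) addr0.
Qed.

Lemma migration_remove_item s j : migration s (remove_item s j) = 0.
Proof. by rewrite /migration big1 // => i /and3P[_ _]; rewrite eqxx. Qed.

Lemma credit_total_remove_item s j : core_invariant s -> alive s j ->
  credit_total (remove_item s j) = credit_total s + size_of s j.
Proof.
move=> s_core sj; rewrite /credit_total sum_nat_with ?(bin_of_lt_fresh s_core sj) //.
by rewrite addrA subrK.
Qed.

Lemma migration_merge_remove_item s j Y Z : Y != Z ->
  migration s (merge_bins (remove_item s j) Y Z) = load (remove_item s j) Y.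
Proof.
move=> ne_YZ; apply: eq_bigl => i.
rewrite [alive (merge_bins _ _ _) i](alive_remove_item s j i).
rewrite [alive (remove_item _ _) i]alive_remove_item /=.
case: (alive s i) (i != j) => [] [] //=.
by case: (eqVneq (bin_of s i) Y) => [->|]; rewrite ?eqxx.
Qed.

Lemma credit_total_merge_bins s Y Z : (Y < fresh_bin s)%N ->
  credit_total (merge_bins s Y Z) = credit_total s - credit s Y.
Proof. by move=> lt_Y; rewrite /credit_total sum_nat_with // addr0. Qed.

Section Potential.
Variable rho : R.
Hypothesis rho_ge0 : 0 <= rho.
Hypothesis rho_pays : forall l, 0 <= l -> l < alpha -> l <= rho * (1 - alpha - l).

Lemma load_le_credit s Y : core_invariant s -> light s Y -> mature s Y ->
  load s Y <= rho * credit s Y.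
Proof.
move=> s_core /andP[_ lt_Y] m_Y.
have load_Y_ge0 := load_ge0 Y (size_of_ge0 s_core).
have credit_Y := mature_credit s_core m_Y.
by apply: le_trans (rho_pays load_Y_ge0 lt_Y) (ler_wpM2l rho_ge0 _); lra.
Qed.

Lemma depart_potential s j : packing_invariant s -> alive s j ->
  migration s (depart s j) + rho * credit_total (depart s j)
    <= rho * credit_total s + rho * size_of s j.
Proof.
move=> s_inv sj; have s'_core := core_remove_item s_inv sj.
case: (departP s_inv sj) => [_|Y Z ne_YZ light_Y _ m_Y _].
  by rewrite migration_remove_item (credit_total_remove_item s_inv sj) add0r mulrDr.
rewrite migration_merge_remove_item //.
rewrite credit_total_merge_bins ?(light_lt_fresh s'_core light_Y) //.
rewrite (credit_total_remove_item s_inv sj) mulrBr mulrDr.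
by have := load_le_credit s'_core light_Y m_Y; lra.
Qed.

End Potential.

Lemma depart_fields s j :
  [/\ narrived (depart s j) = narrived s,
      gone (depart s j) = [eta gone s with j |-> true] &
      size_of (depart s j) = size_of s].
Proof. by rewrite /depart; case: ifP => // _; case: find_light => [X|] //; case: ifP. Qed.

Definition open_bins_of s := undup [seq bin_of s i | i <- iota 0 (narrived s) & alive s i].

Lemma open_bins_of_le s : packing_invariant s ->
  alpha * ((size (open_bins_of s))%:R - 1) <= \sum_(0 <= i < narrived s | alive s i) size_of s i.
Proof.
move=> s_inv; rewrite /open_bins_of; set r := filter _ _; set U := undup _.
have -> : \sum_(0 <= i < narrived s | alive s i) size_of s i = \sum_(i <- r) size_of s i.
  by rewrite big_filter /index_iota subn0.
have load_r b : \sum_(i <- r | predT i && (bin_of s i == b)) size_of s i = load s b.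
  by rewrite big_filter_cond /load /index_iota subn0.
have open_nonempty b : b \in U -> nonempty s b.
  rewrite mem_undup => /mapP[i]; rewrite mem_filter => /andP[si _] ->.
  by apply/nonemptyP; exists i.
rewrite (@sum_partition_seq _ _ _ _ U predT (bin_of s)) ?undup_uniq //; last first.
  by move=> i ir _; rewrite mem_undup map_f.
under eq_bigr => b _ do rewrite load_r.
apply: sum_ge_all_but_one; [exact: ltW|exact: undup_uniq| |].
  by move=> b _; apply: load_ge0 (size_of_ge0 s_inv).
move=> b1 b2 /open_nonempty ne1 /open_nonempty ne2 lt1 lt2.
by apply: (light_unique s_inv); apply/andP.
Qed.
End Algorithm.

(** * Running the algorithm on an instance *)

Definition alg (alpha : R) : online_alg := fun h => bin_of (run alpha h).

Section Run.
Variable alpha : R.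
Hypothesis alpha_gt0 : 0 < alpha.
Hypothesis alpha_lt_half : alpha + alpha < 1.
Variable I : seq item.
Hypothesis I_valid : valid_instance I.
Local Notation n := (size I).
Local Notation ev := (events I).
Local Notation x0 := ((0 : R), 0%N, 0%N).

Definition state_after k := run alpha (map (observe I) (take k ev)).

Definition tracks k (s : state) :=
  [/\ narrived s = count is_arrival (take k ev),
      forall i, gone s i = (dep_ev I i \in take k ev) &
      forall i, (i < narrived s)%N -> size_of s i = sz (it_ I i)].

Definition departed_size k := \sum_(0 <= i < n | dep_ev I i \in take k ev) sz (it_ I i).

Lemma sz_bounds i : (i < n)%N -> 0 <= sz (it_ I i) <= 1.
Proof. by case: I_valid => /(_ i) valid_i _ /valid_i [_ []]. Qed.

Lemma alive_tracks k s i : tracks k s -> alive s i = present_after I k i.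
Proof.
case=> narrivedE goneE _; rewrite /alive /present_after narrivedE goneE.
case: (ltnP i n) => [lt_in|le_ni]; first by rewrite arr_ev_in_take.
have -> : (i < count is_arrival (take k ev))%N = false.
  by apply/negbTE; rewrite -leqNgt (leq_trans (count_arrivals_take I_valid k)).
suff -> : (arr_ev I i \in take k ev) = false by [].
by apply: contraTF le_ni => /mem_take; rewrite arr_ev_in_eventsP -ltnNge.
Qed.

Lemma sum_alive_tracks k s (Q : pred nat) : tracks k s ->
  \sum_(0 <= i < narrived s | alive s i && Q i) size_of s i =
  \sum_(0 <= i < n | present_after I k i && Q i) sz (it_ I i).
Proof.
move=> s_tracks; have [narrivedE _ sizeE] := s_tracks.
rewrite (@sum_nat_widen_cond _ _ n _ _ (fun i => sz (it_ I i))) //.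
- by apply: eq_bigl => i; rewrite (alive_tracks _ s_tracks).
- by rewrite narrivedE count_arrivals_take.
- by move=> i /andP[/andP[]].
Qed.

Lemma state_after_step k : (k < size ev)%N ->
  state_after k.+1 = step alpha (state_after k) (observe I (nth x0 ev k)).
Proof. by move=> lt_k; rewrite /state_after (take_nth x0) // map_rcons /run foldl_rcons. Qed.

Section Step.
Variables (k j : nat).
Hypothesis lt_k : (k < size ev)%N.
Hypothesis lt_j : (j < n)%N.
Hypothesis k_tracks : tracks k (state_after k).

Let take_succ : take k.+1 ev = rcons (take k ev) (nth x0 ev k).
Proof. exact: take_nth. Qed.

Let fresh_event : nth x0 ev k \notin take k ev.
Proof. exact: nth_notin_take (uniq_events I) lt_k. Qed.

Lemma step_departure : nth x0 ev k = dep_ev I j ->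
  [/\ alive (state_after k) j, state_after k.+1 = depart alpha (state_after k) j,
      tracks k.+1 (state_after k.+1) &
      departed_size k.+1 = departed_size k + sz (it_ I j)].
Proof.
move=> ej; have [narrivedE goneE sizeE] := k_tracks.
have dep_take i : (dep_ev I i \in take k.+1 ev) = (i == j) || (dep_ev I i \in take k ev).
  by rewrite take_succ mem_rcons in_cons ej (inj_eq (@dep_ev_inj I)).
have j_alive : alive (state_after k) j.
  rewrite (alive_tracks _ k_tracks) /present_after -ej fresh_event andbT.
  have := @arr_ev_in_take_dep I I_valid j k.+1; rewrite dep_take eqxx take_succ ej.
  by rewrite mem_rcons in_cons (eq_sym (arr_ev I j)) dep_ev_neq_arr_ev => /(_ isT).
have stepE : state_after k.+1 = depart alpha (state_after k) j.
  by rewrite state_after_step // /observe ej.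
have [narrivedE' goneE' sizeE'] := depart_fields alpha (state_after k) j.
split => //; first split.
- by rewrite stepE narrivedE' narrivedE take_succ -cats1 count_cat ej /is_arrival /= !addn0.
- by move=> i; rewrite stepE goneE' /= dep_take; case: eqP => //= _; apply: goneE.
- by move=> i; rewrite stepE narrivedE' sizeE'; apply: sizeE.
rewrite /departed_size (@sum_D1_cond _ _ _ _ _ j) ?iota_uniq ?mem_index_iota //.
rewrite [in RHS](@sum_D1_cond _ _ _ _ _ j) ?iota_uniq ?mem_index_iota //.
rewrite dep_take eqxx -ej (negbTE fresh_event) add0r addrC; congr (_ + _).
by apply: eq_bigl => i; rewrite dep_take; case: (i == j); rewrite ?andbF.
Qed.

Lemma step_arrival : nth x0 ev k = arr_ev I j ->
  [/\ state_after k.+1 = arrive alpha (state_after k) (sz (it_ I j)),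
      tracks k.+1 (state_after k.+1) &
      departed_size k.+1 = departed_size k].
Proof.
move=> ej; have [narrivedE goneE sizeE] := k_tracks.
have dep_take i : (dep_ev I i \in take k.+1 ev) = (dep_ev I i \in take k ev).
  by rewrite take_succ mem_rcons in_cons ej dep_ev_neq_arr_ev.
have count_succ : count is_arrival (take k.+1 ev) = (count is_arrival (take k ev)).+1.
  by rewrite take_succ -cats1 count_cat ej /is_arrival /= addn0 addn1.
have j_new : j = narrived (state_after k).
  have := arr_ev_in_take I_valid k.+1 lt_j.
  rewrite count_succ take_succ mem_rcons in_cons ej eqxx => /esym lt_j1.
  have := arr_ev_in_take I_valid k lt_j; rewrite -ej (negbTE fresh_event) => /esym/negbT.
  by rewrite -narrivedE -leqNgt; lia.
have stepE : state_after k.+1 = arrive alpha (state_after k) (sz (it_ I j)).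
  by rewrite state_after_step // /observe ej.
have [narrivedE' goneE' sizeE' _ _] := arrive_fields alpha (state_after k) (sz (it_ I j)).
split => //; last by apply: eq_bigl => i; rewrite dep_take.
split.
- by rewrite stepE narrivedE' narrivedE count_succ.
- by move=> i; rewrite stepE goneE' dep_take goneE.
- move=> i; rewrite stepE narrivedE' sizeE' /= ltnS leq_eqVlt.
  by case: eqP => [->|_ /sizeE //]; rewrite -j_new.
Qed.

End Step.

Lemma run_invariant k : (k <= size ev)%N ->
  tracks k (state_after k) /\ packing_invariant alpha (state_after k).
Proof.
elim: k => [_|k IH lt_k].
  by rewrite /state_after /tracks take0; split; [|exact: invariant_init].
have [k_tracks k_inv] := IH (ltnW lt_k).
case: (events_cases (mem_nth x0 lt_k)) => [][j lt_j ej].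
  have [j_alive -> ? _] := step_departure lt_k lt_j k_tracks ej.
  by split; last apply: invariant_depart.
have [-> ? _] := step_arrival lt_k lt_j k_tracks ej.
by split; last apply: invariant_arrive (sz_bounds lt_j).
Qed.

Lemma feasible_alg : feasible (alg alpha) I.
Proof.
move=> k le_k b; have [k_tracks k_inv] := run_invariant le_k.
by have := load_le1 k_inv b; rewrite /load (sum_alive_tracks (fun i => _ == b) k_tracks).
Qed.

Lemma migration_state_after k : (k < size ev)%N ->
  \sum_(0 <= i < n | [&& present_after I k i, present_after I k.+1 i
                       & config (alg alpha) I k i != config (alg alpha) I k.+1 i]) sz (it_ I i)
  = migration (state_after k) (state_after k.+1).
Proof.
move=> lt_k; have [k_tracks _] := run_invariant (ltnW lt_k).
have [k1_tracks _] := run_invariant lt_k.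
rewrite /migration (sum_alive_tracks (fun i => _ && _) k_tracks).
by apply: eq_bigl => i; rewrite (alive_tracks _ k1_tracks).
Qed.

Lemma packable_size_le P m : packable I P m -> \sum_(0 <= i < n | P i) sz (it_ I i) <= m%:R.
Proof.
case=> f [f_lt f_fits].
rewrite (@sum_partition_seq _ _ _ _ (index_iota 0 m) P f) ?iota_uniq //; last first.
  by move=> i; rewrite !mem_index_iota => /andP[_ lt_in] /(f_lt i lt_in).
apply: le_trans (_ : \sum_(0 <= b < m) (1 : R) <= _).
  by apply: ler_sum => b _; apply: f_fits.
by rewrite sumr_const_nat subn0.
Qed.

Lemma open_bins_alg t m : packable I (present_at I t) m ->
  (open_bins (alg alpha) I t)%:R <= m%:R / alpha + 1.
Proof.
move=> /packable_size_le present_le.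
set K := count (fun e => ev_time e <= t) ev.
have [K_tracks K_inv] := run_invariant (count_size _ _ : (K <= size ev)%N).
have [narrivedE _ _] := K_tracks.
have le_n : (narrived (state_after K) <= n)%N by rewrite narrivedE count_arrivals_take.
have presentE i : (i < n)%N -> present_at I t i = alive (state_after K) i.
  by move=> lt_in; rewrite (alive_tracks _ K_tracks) present_at_after.
have -> : open_bins (alg alpha) I t = size (open_bins_of (state_after K)).
  rewrite /open_bins /open_bins_of; congr (size (undup (map _ _))).
  rewrite (eq_in_filter (a2 := alive (state_after K))); last first.
    by move=> i; rewrite mem_iota => /andP[_ lt_in]; apply: presentE.
  rewrite -(subnKC le_n) iotaD filter_cat add0n -[RHS]cats0; congr (_ ++ _).
  rewrite (@eq_in_filter _ _ pred0) ?filter_pred0 // => i.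
  by rewrite mem_iota => /andP[le_i _]; apply: contraTF le_i => /andP[lt_i _]; rewrite -ltnNge.
have := open_bins_of_le alpha_gt0 K_inv.
under eq_bigl => i do rewrite -[alive _ i]andbT.
rewrite (sum_alive_tracks predT K_tracks).
under eq_bigl => i do rewrite andbT.
have -> : \sum_(0 <= i < n | present_after I K i) sz (it_ I i) =
          \sum_(0 <= i < n | present_at I t i) sz (it_ I i).
  rewrite big_mkcond [RHS]big_mkcond; apply: eq_big_nat => i /andP[_ lt_in].
  by rewrite present_at_after.
move/le_trans/(_ present_le); rewrite -ler_pdivlMl // mulrC => open_le.
by rewrite -lerBlDr.
Qed.

Section Migration.
Variable rho : R.
Hypothesis rho_ge0 : 0 <= rho.
Hypothesis rho_pays : forall l, 0 <= l -> l < alpha -> l <= rho * (1 - alpha - l).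

Lemma run_potential k : (k <= size ev)%N ->
  \sum_(0 <= k' < k) migration (state_after k') (state_after k'.+1)
    + rho * credit_total (state_after k) <= rho * departed_size k.
Proof.
elim: k => [_|k IH lt_k].
  rewrite big_geq // add0r /state_after take0 /credit_total big_geq // mulr0.
  by rewrite /departed_size big1 ?mulr0 // => i; rewrite take0.
have [k_tracks k_inv] := run_invariant (ltnW lt_k).
suff step : migration (state_after k) (state_after k.+1) + rho * credit_total (state_after k.+1)
    <= rho * credit_total (state_after k) + rho * (departed_size k.+1 - departed_size k).
  by rewrite big_nat_recr //=; move: (IH (ltnW lt_k)) step; rewrite mulrBr; lra.
case: (events_cases (mem_nth x0 lt_k)) => [][j lt_j ej].
  have [j_alive -> _ ->] := step_departure lt_k lt_j k_tracks ej.
  have [_ _ sizeE] := k_tracks.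
  rewrite addrAC subrr add0r -sizeE; last by case/andP: j_alive.
  exact: depart_potential rho_ge0 rho_pays _ _ k_inv j_alive.
have [-> _ ->] := step_arrival lt_k lt_j k_tracks ej.
by rewrite migration_arrive (credit_total_arrive _ k_inv) subrr mulr0 addr0 add0r.
Qed.

Lemma migrated_size_alg : migrated_size (alg alpha) I <= rho * total_size I.
Proof.
rewrite /migrated_size.
under eq_big_nat => k /andP[_ lt_k] do rewrite (migration_state_after lt_k).
have := run_potential (leqnn (size ev)).
have [_ end_inv] := run_invariant (leqnn (size ev)).
have credit_ge0 : 0 <= rho * credit_total (state_after (size ev)).
  by apply/mulr_ge0/sumr_ge0 => // b _; apply: credit_ge0 end_inv b.
have departed_le : rho * departed_size (size ev) <= rho * total_size I.
  apply: (ler_wpM2l rho_ge0); rewrite /departed_size /total_size big_mkcond /=.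
  by apply: ler_sum_nat => i /andP[_ lt_in]; case: ifP => // _; case/andP: (sz_bounds lt_in).
lra.
Qed.

End Migration.

End Run.

(* [l / (1 - alpha - l)] increases with [l]; the worst case [l = alpha] gives the ratio. *)
Lemma le_migration_ratio (alpha l : R) : 0 < alpha -> alpha + alpha < 1 -> l <= alpha ->
  l <= alpha / (1 - 2 * alpha) * (1 - alpha - l).
Proof.
move=> alpha_gt0 alpha_lt_half le_l; rewrite mulrAC ler_pdivlMr; last by lra.
have : 0 <= (alpha - l) * (1 - alpha) by apply: mulr_ge0; lra.
nra.
Qed.

Theorem theorem22 (alpha : R) (halpha : 0 < alpha < 1 / 2) :
  exists A : online_alg,
    forall I : seq item, valid_instance I ->
      feasible A I /\
      migrated_size A I <= alpha / (1 - 2 * alpha) * total_size I /\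
      (forall (t : R) (m : nat), packable I (present_at I t) m ->
         (open_bins A I t)%:R <= m%:R / alpha + 1).
Proof.
case/andP: halpha => alpha_gt0; rewrite ltr_pdivlMr ?ltr0n // => lt_2alpha.
have alpha_lt_half : alpha + alpha < 1 by lra.
have rho_ge0 : 0 <= alpha / (1 - 2 * alpha) by apply: divr_ge0; lra.
exists (alg alpha) => I I_valid; split; [|split].
- exact: (feasible_alg alpha_gt0 alpha_lt_half I_valid).
- apply: (migrated_size_alg alpha_gt0 alpha_lt_half I_valid rho_ge0) => l _ /ltW.
  exact: le_migration_ratio.
- exact: (open_bins_alg alpha_gt0 alpha_lt_half I_valid).
Qed.
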